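(* Let $r,K,\alpha,\phi,c,m_1,m_2,\lambda,a,d,\delta,\gamma,\sigma,\eta$ be positive constants with $\phi<1$ and $m_1>m_2$, and consider the system \[ \begin{cases} \dot X = rX\left(1-\frac{X}{K}\right)-\frac{\alpha XS}{c+X}-\frac{\phi\alpha XI}{c+X},\\[1mm] \dot S = \frac{m_1\alpha XS}{c+X}-\frac{\lambda AS}{a+A}-dS,\\[1mm] \dot I = \frac{m_2\phi\alpha XI}{c+X}+\frac{\lambda AS}{a+A}-(d+\delta)I,\\[1mm] \dot A = \gamma+\sigma(S+I)-\eta A. \end{cases} \] Let $M:=\max\{X(0),K\}$ and \[ \mathcal D:=\left\{(X,S,I,A)\in\mathbb R_+^4:\ 0\le X\le M,\ 0\le X+S+I\le \frac{(r+4d)M}{4d},\ 0\le A\le \frac{4rd+\sigma(r+4d)M}{4\eta rd}\right\}. \] Then every solution of the system that starts in $\mathcal D$ is uniformly bounded.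
   Context: $\mathbb R_+^4$ denotes the closed non-negative orthant. *)

From Stdlib Require Import Reals.
From Coquelicot Require Import Coquelicot.
Open Scope R_scope.

Definition fX (r K alpha phi c : R) (X S I : R) : R :=
  r * X * (1 - X / K) - alpha * X * S / (c + X) - phi * alpha * X * I / (c + X).

Definition fS (alpha c m1 lambda a d : R) (X S A : R) : R :=
  m1 * alpha * X * S / (c + X) - lambda * A * S / (a + A) - d * S.

Definition fI (alpha phi c m2 lambda a d delta : R) (X S I A : R) : R :=
  m2 * phi * alpha * X * I / (c + X) + lambda * A * S / (a + A) - (d + delta) * I.

Definition fA (gamma sigma eta : R) (S I A : R) : R :=
  gamma + sigma * (S + I) - eta * A.

(* The region D (with M := max{X(0), K} passed as parameter). *)
Definition in_D (r d sigma eta M : R) (X S I A : R) : Prop :=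
  0 <= X /\ 0 <= S /\ 0 <= I /\ 0 <= A /\
  X <= M /\
  0 <= X + S + I /\ X + S + I <= (r + 4 * d) * M / (4 * d) /\
  A <= (4 * r * d + sigma * (r + 4 * d) * M) / (4 * eta * r * d).

From Stdlib Require Import Reals Lra Psatz Classical.
From Coquelicot Require Import Coquelicot.
Open Scope R_scope.

(* While a component is negative and all components stay above some small [-eps], its
   right-hand side is bounded below by a constant multiple [G] of that component, so
   [exp (- G t)] times the component cannot decrease; a continuous induction in time keeps
   the solution in the nonnegative orthant.  There, [X' <= 0] as soon as [X >= K]; the
   predation terms cancel in [W = m1 X + S + I] up to [-(m1 - m2) phi alpha X I / (c + X) <= 0],
   so [W' <= m1 (r + d) M - d W]; and [A' <= gamma + sigma W - eta A].  A function whose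
   derivative is nonpositive above a level [L] never exceeds [Rmax (V 0) L], which bounds
   [X], [W] and [A] in turn. *)

Lemma ball_R (x e y : R) : ball x e y <-> x - e < y < x + e.
Proof.
change (Rabs (y - x) < e <-> x - e < y < x + e).
split; [intros H; apply Rabs_def2 in H | intros H; apply Rabs_def1]; lra.
Qed.

Lemma continuous_at_right (f : R -> R) (x : R) :
  continuous f x -> filterlim f (at_right x) (locally (f x)).
Proof. intros Hf. exact (filterlim_filter_le_1 f (filter_le_within (F := locally x) _) Hf). Qed.

Lemma le_of_is_derive_nonneg (g g' : R -> R) (x y : R) :
  x <= y ->
  (forall t, x <= t <= y -> is_derive g t (g' t)) ->
  (forall t, x <= t <= y -> 0 <= g' t) ->
  g x <= g y.
Proof.
intros Hxy Hd Hnonneg.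
destruct (Rle_lt_or_eq_dec x y Hxy) as [Hlt | ->]; [| lra].
destruct (MVT_gen g x y g') as [xi [Hxi Heq]]; rewrite ?Rmin_left, ?Rmax_right in * by lra.
- intros t Ht. apply Hd. lra.
- intros t Ht. apply continuity_pt_filterlim, (ex_derive_continuous g), (ex_intro _ _ (Hd t Ht)).
- assert (0 <= g' xi) by (apply Hnonneg, Hxi). nra.
Qed.

Lemma nonneg_preserved (g g' : R -> R) (t0 t1 : R) :
  t0 <= t1 ->
  filterlim g (at_right t0) (locally (g t0)) ->
  (forall t, t0 < t <= t1 -> is_derive g t (g' t)) ->
  (forall t, t0 < t <= t1 -> g t < 0 -> 0 <= g' t) ->
  0 <= g t0 -> 0 <= g t1.
Proof.
intros H01 Hg0 Hd Hsign Hpos.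
destruct (Rle_or_lt 0 (g t1)) as [ok | Hneg]; [exact ok | exfalso].
assert (Hcont : forall t, t0 < t <= t1 -> continuous g t)
  by (intros t Ht; exact (ex_derive_continuous g t (ex_intro _ _ (Hd t Ht)))).
set (E := fun t => t0 <= t <= t1 /\ 0 <= g t).
assert (E0 : E t0) by (split; [lra | exact Hpos]).
destruct (completeness E) as [u [Hub Hlub]].
{ exists t1. intros t Et. apply Et. }
{ exists t0. exact E0. }
assert (Hu0 : t0 <= u) by (apply Hub, E0).
assert (Hu1 : u <= t1) by (apply Hlub; intros t Et; apply Et).
assert (Hgu0 : 0 <= g u).
{ destruct (Rle_lt_or_eq_dec t0 u Hu0) as [Hlt | <-]; [| exact Hpos].
  apply Rnot_lt_le. intros Hgu.
  destruct (Hcont u (conj Hlt Hu1) _ (open_lt 0 (g u) Hgu)) as [δ Hδ].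
  assert (u <= u - δ / 2) by
    (apply Hlub; intros t [Ht Hgt]; apply Rnot_lt_le; intros Htδ;
     assert (t <= u) by (apply Hub; split; [exact Ht | exact Hgt]);
     assert (g t < 0) by (apply Hδ, ball_R; destruct δ; simpl in *; lra);
     lra).
  destruct δ; simpl in *; lra. }
assert (Hut : u < t1) by (destruct (Rle_lt_or_eq_dec u t1 Hu1) as [? | ->]; lra).
assert (Hafter : forall t, u < t <= t1 -> g t < 0).
{ intros t Ht. apply Rnot_le_lt. intros Hgt.
  assert (t <= u) by (apply Hub; split; [lra | exact Hgt]). lra. }
assert (Hmono : forall x, u < x <= t1 -> g x <= g t1).
{ intros x Hx. apply (le_of_is_derive_nonneg g g'); [lra | |];
    intros y Hy; [apply Hd | apply Hsign; [| apply Hafter]]; lra. }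
assert (g u <= g t1).
{ apply (closed_filterlim_loc (F := at_right u) g (fun y => y <= g t1)).
  - destruct (Rle_lt_or_eq_dec t0 u Hu0) as [Hlt | <-]; [| exact Hg0].
    apply continuous_at_right, Hcont. lra.
  - exists (mkposreal _ (ltac:(lra) : 0 < t1 - u)). intros y Hy Huy.
    apply ball_R in Hy. simpl in Hy. apply Hmono. lra.
  - apply closed_le. }
lra.
Qed.

Lemma nonneg_preserved_linear (f f' : R -> R) (G t0 t1 : R) :
  t0 <= t1 ->
  filterlim f (at_right t0) (locally (f t0)) ->
  (forall t, t0 < t <= t1 -> is_derive f t (f' t)) ->
  (forall t, t0 < t <= t1 -> f t < 0 -> G * f t <= f' t) ->
  0 <= f t0 -> 0 <= f t1.
Proof.
intros H01 Hf0 Hd Hsign Hpos.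
set (w t := exp (- G * t)).
assert (Hw : forall t, 0 < w t) by (intros t; apply exp_pos).
assert (Hwd : forall t, is_derive w t (- G * w t))
  by (intros t; unfold w; auto_derive; [easy | ring]).
enough (0 <= w t1 * f t1) by (specialize (Hw t1); nra).
apply (nonneg_preserved (fun t => w t * f t) (fun t => w t * (f' t - G * f t)) t0 t1 H01).
- assert (Hwc := continuous_at_right w t0 (ex_derive_continuous w t0 (ex_intro _ _ (Hwd t0)))).
  exact (filterlim_comp_2 w f Rmult Hwc Hf0 (filterlim_mult (K := R_AbsRing) _ _)).
- intros t Ht. replace (w t * (f' t - G * f t)) with ((- G * w t) * f t + w t * f' t) by ring.
  apply (is_derive_mult w f); [apply Hwd | apply Hd, Ht | intros; apply Rmult_comm].
- intros t Ht Hneg. specialize (Hw t).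
  assert (f t < 0) by nra.
  assert (G * f t <= f' t) by (apply Hsign; assumption). nra.
- specialize (Hw t0). nra.
Qed.

Lemma filterlim_plus_fun {T : Type} {F : (T -> Prop) -> Prop} {FF : Filter F}
  (f g : T -> R) (x y : R) :
  filterlim f F (locally x) -> filterlim g F (locally y) ->
  filterlim (fun t => f t + g t) F (locally (x + y)).
Proof.
intros Hf Hg.
exact (filterlim_comp_2 f g Rplus Hf Hg (filterlim_plus (K := R_AbsRing) x y)).
Qed.

Lemma filterlim_at_right_of_is_derive (V V' : R -> R) (s : R) :
  filterlim V (at_right 0) (locally (V 0)) ->
  (forall t, 0 < t -> is_derive V t (V' t)) ->
  0 <= s -> filterlim V (at_right s) (locally (V s)).
Proof.
intros HV0 Hd Hs.
destruct (Rle_lt_or_eq_dec 0 s Hs) as [Hpos | <-]; [| exact HV0].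
apply continuous_at_right, (ex_derive_continuous V), (ex_intro _ _ (Hd s Hpos)).
Qed.

Lemma le_preserved (V V' : R -> R) (L : R) :
  filterlim V (at_right 0) (locally (V 0)) ->
  (forall t, 0 < t -> is_derive V t (V' t)) ->
  (forall t, 0 < t -> L < V t -> V' t <= 0) ->
  V 0 <= L -> forall t, 0 <= t -> V t <= L.
Proof.
intros HV0 Hd Hsign H0 t Ht.
enough (0 <= L - V t) by lra.
apply (nonneg_preserved (fun t => L - V t) (fun t => - V' t) 0 t Ht).
- apply (filterlim_comp _ _ _ V (fun y => L - y) _ _ _ HV0).
  apply (ex_derive_continuous (fun y => L - y)). auto_derive. easy.
- intros s Hs. replace (- V' s) with (minus zero (V' s))
    by (unfold minus, plus, opp, zero; simpl; ring).
  exact (is_derive_minus (fun _ => L) V s _ _ (is_derive_const L s) (Hd s (proj1 Hs))).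
- intros s Hs Hneg. assert (V' s <= 0) by (apply Hsign; lra). lra.
- lra.
Qed.

Lemma le_Rmax_of_dissipative (V V' : R -> R) (beta kappa : R) :
  0 < kappa ->
  filterlim V (at_right 0) (locally (V 0)) ->
  (forall t, 0 < t -> is_derive V t (V' t)) ->
  (forall t, 0 < t -> V' t <= beta - kappa * V t) ->
  forall t, 0 <= t -> V t <= Rmax (V 0) (beta / kappa).
Proof.
intros Hk HV0 Hd Hdiss.
apply (le_preserved V V'); [exact HV0 | exact Hd | | apply Rmax_l].
intros t Ht Hgt. specialize (Hdiss t Ht).
assert (beta / kappa < V t) by (eapply Rle_lt_trans; [apply Rmax_r | exact Hgt]).
assert (beta < V t * kappa) by (apply Rlt_div_l; lra).
nra.
Qed.

Lemma nonneg_of_nonneg_before (V : R -> R) (s : R) :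
  0 < s -> continuous V s -> (forall t, 0 <= t < s -> 0 <= V t) -> 0 <= V s.
Proof.
intros Hs HV Hbefore.
apply (closed_filterlim_loc (F := at_left s) V (fun y => 0 <= y)).
- exact (filterlim_filter_le_1 V (filter_le_within (F := locally s) _) HV).
- exists (mkposreal s Hs). intros t Ht Hts. apply ball_R in Ht. simpl in Ht.
  apply Hbefore. lra.
- apply closed_ge.
Qed.

Lemma continuous_induction (Q : R -> Prop) :
  Q 0 ->
  (forall s, 0 <= s -> Q s -> exists eps, 0 < eps /\ forall t, s <= t <= s + eps -> Q t) ->
  (forall s, 0 < s -> (forall t, 0 <= t < s -> Q t) -> Q s) ->
  forall t, 0 <= t -> Q t.
Proof.
intros Q0 Hstep Hclosed T HT.
destruct (classic (Q T)) as [ok | HnQ]; [exact ok | exfalso].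
set (E := fun t => 0 <= t <= T /\ forall s, 0 <= s <= t -> Q s).
assert (E0 : E 0) by (split; [lra | intros s Hs; replace s with 0 by lra; exact Q0]).
destruct (completeness E) as [u [Hub Hlub]].
{ exists T. intros t Et. apply Et. }
{ exists 0. exact E0. }
assert (Hu0 : 0 <= u) by (apply Hub, E0).
assert (Hbefore : forall t, 0 <= t < u -> Q t).
{ intros t Ht. destruct (classic (exists e, E e /\ t <= e)) as [[e [[_ He] Hte]] | Hno].
  - apply He. lra.
  - assert (u <= t) by (apply Hlub; intros e Ee; apply Rnot_lt_le; intros Hlt;
      apply Hno; exists e; split; [exact Ee | lra]).
    lra. }
assert (Hu : Q u).
{ destruct (Rle_lt_or_eq_dec 0 u Hu0) as [Hpos | <-]; [apply Hclosed | ]; assumption. }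
destruct (Hstep u Hu0 Hu) as [eps [Heps Hafter]].
destruct (Rle_or_lt T (u + eps)) as [HTu | HTu].
- apply HnQ, Hafter. split; [| exact HTu].
  apply Rnot_lt_le. intros HTlt. apply HnQ, Hbefore. lra.
- assert (u + eps <= u); [| lra].
  apply Hub. split; [lra |]. intros s Hs.
  destruct (Rlt_or_le s u); [apply Hbefore | apply Hafter]; lra.
Qed.

Section Model.

Context {r K alpha phi c m1 m2 lambda a d delta gamma sigma eta : R}.
Hypotheses (hr : 0 < r) (hK : 0 < K) (halpha : 0 < alpha) (hphi : 0 < phi)
  (hc : 0 < c) (hm1 : 0 < m1) (hm2 : 0 < m2) (hlambda : 0 < lambda)
  (ha : 0 < a) (hd : 0 < d) (hdelta : 0 < delta) (hgamma : 0 < gamma)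
  (hsigma : 0 < sigma) (heta : 0 < eta) (hphi1 : phi < 1) (hm12 : m2 < m1).

Section Margin.

Variable eps : R.
Hypotheses (eps_c : eps <= c / 2) (eps_a : eps <= a / 2) (eps_K : eps <= K)
  (eps_gamma : eps <= gamma / (2 * sigma)).

Lemma fX_ge_on_neg (x s i : R) :
  - eps <= x < 0 -> - eps <= s -> - eps <= i ->
  (2 * r + 2 * alpha) * x <= fX r K alpha phi c x s i.
Proof.
intros Hx Hs Hi.
assert (Hxk : -1 <= x / K) by (apply Rle_div_r; lra).
assert (Hsq : -1 <= s / (c + x)) by (apply Rle_div_r; lra).
assert (Hiq : -1 <= i / (c + x)) by (apply Rle_div_r; lra).
replace (fX r K alpha phi c x s i)
  with (x * (r * (1 - x / K) - alpha * (s / (c + x)) - phi * alpha * (i / (c + x))))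
  by (unfold fX, Rdiv; ring).
rewrite (Rmult_comm _ x). apply Rmult_le_compat_neg_l; [lra |].
assert (0 < phi * alpha) by (apply Rmult_lt_0_compat; lra).
nra.
Qed.

Lemma fS_ge_on_neg (x s a0 : R) :
  - eps <= x -> s < 0 -> - eps <= a0 ->
  (m1 * alpha + lambda) * s <= fS alpha c m1 lambda a d x s a0.
Proof.
intros Hx Hs Ha0.
assert (Hxq : x / (c + x) <= 1) by (apply (Rdiv_le_1 x (c + x)); lra).
assert (Haq : -1 <= a0 / (a + a0)) by (apply Rle_div_r; lra).
replace (fS alpha c m1 lambda a d x s a0)
  with (s * (m1 * alpha * (x / (c + x)) - lambda * (a0 / (a + a0)) - d))
  by (unfold fS, Rdiv; ring).
rewrite (Rmult_comm _ s). apply Rmult_le_compat_neg_l; [lra |].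
assert (0 < m1 * alpha) by (apply Rmult_lt_0_compat; lra).
nra.
Qed.

Lemma fI_ge_on_neg (x s i a0 : R) :
  - eps <= x -> 0 <= s -> i < 0 -> 0 <= a0 ->
  (m2 * phi * alpha) * i <= fI alpha phi c m2 lambda a d delta x s i a0.
Proof.
intros Hx Hs Hi Ha0.
assert (Hxq : x / (c + x) <= 1) by (apply (Rdiv_le_1 x (c + x)); lra).
assert (Hinf : 0 <= lambda * a0 * s / (a + a0))
  by (apply Rdiv_le_0_compat; [apply Rmult_le_pos; nra | lra]).
replace (fI alpha phi c m2 lambda a d delta x s i a0)
  with (i * (m2 * phi * alpha * (x / (c + x)) - (d + delta)) + lambda * a0 * s / (a + a0))
  by (unfold fI, Rdiv; ring).
assert (m2 * phi * alpha * i <= i * (m2 * phi * alpha * (x / (c + x)) - (d + delta))); [| lra].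
rewrite (Rmult_comm _ i). apply Rmult_le_compat_neg_l; [lra |].
assert (0 < m2 * phi * alpha) by (repeat apply Rmult_lt_0_compat; lra).
nra.
Qed.

Lemma fA_nonneg_on_neg (s i a0 : R) :
  - eps <= s -> - eps <= i -> a0 < 0 -> 0 <= fA gamma sigma eta s i a0.
Proof.
intros Hs Hi Ha0.
assert (eps * (2 * sigma) <= gamma) by (apply Rle_div_r; [lra | exact eps_gamma]).
unfold fA. nra.
Qed.

End Margin.

Lemma fX_nonpos_ge_K (x s i : R) :
  K <= x -> 0 <= s -> 0 <= i -> fX r K alpha phi c x s i <= 0.
Proof.
intros Hx Hs Hi.
assert (1 <= x / K) by (apply Rle_div_r; lra).
assert (0 <= alpha * x * s / (c + x))
  by (apply Rdiv_le_0_compat; [repeat apply Rmult_le_pos |]; lra).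
assert (0 <= phi * alpha * x * i / (c + x))
  by (apply Rdiv_le_0_compat; [repeat apply Rmult_le_pos |]; lra).
assert (0 <= r * x) by (apply Rmult_le_pos; lra).
unfold fX. nra.
Qed.

Lemma weighted_sum_dissipative (M x s i a0 : R) :
  0 <= x <= M -> 0 <= s -> 0 <= i ->
  m1 * fX r K alpha phi c x s i + fS alpha c m1 lambda a d x s a0
    + fI alpha phi c m2 lambda a d delta x s i a0
  <= m1 * (r + d) * M - d * (m1 * x + s + i).
Proof.
intros Hx Hs Hi.
replace (m1 * fX r K alpha phi c x s i + fS alpha c m1 lambda a d x s a0
           + fI alpha phi c m2 lambda a d delta x s i a0)
  with (m1 * r * x - m1 * r * x * (x / K) - (m1 - m2) * phi * alpha * (x * i / (c + x))
        - d * s - (d + delta) * i)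
  by (unfold fX, fS, fI, Rdiv; ring).
assert (0 <= x / K) by (apply Rdiv_le_0_compat; lra).
assert (0 <= x * i / (c + x)) by (apply Rdiv_le_0_compat; [apply Rmult_le_pos |]; lra).
assert (0 <= m1 * r * x * (x / K))
  by (apply Rmult_le_pos; [repeat apply Rmult_le_pos; lra | assumption]).
assert (0 <= (m1 - m2) * phi * alpha * (x * i / (c + x)))
  by (apply Rmult_le_pos; [repeat apply Rmult_le_pos; lra | assumption]).
assert (m1 * (r + d) * x <= m1 * (r + d) * M)
  by (apply Rmult_le_compat_l; [apply Rmult_le_pos |]; lra).
assert (0 <= delta * i) by (apply Rmult_le_pos; lra).
lra.
Qed.

Section Solution.

Context {X S I A : R -> R}.
Hypotheses
  (cX : filterlim X (at_right 0) (locally (X 0)))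
  (cS : filterlim S (at_right 0) (locally (S 0)))
  (cI : filterlim I (at_right 0) (locally (I 0)))
  (cA : filterlim A (at_right 0) (locally (A 0)))
  (dX : forall t, 0 < t -> is_derive X t (fX r K alpha phi c (X t) (S t) (I t)))
  (dS : forall t, 0 < t -> is_derive S t (fS alpha c m1 lambda a d (X t) (S t) (A t)))
  (dI : forall t, 0 < t ->
        is_derive I t (fI alpha phi c m2 lambda a d delta (X t) (S t) (I t) (A t)))
  (dA : forall t, 0 < t -> is_derive A t (fA gamma sigma eta (S t) (I t) (A t))).

Lemma solution_nonneg_near (s eps w : R) :
  0 <= s -> eps <= c / 2 -> eps <= a / 2 -> eps <= K -> eps <= gamma / (2 * sigma) ->
  0 <= X s -> 0 <= S s -> 0 <= I s -> 0 <= A s ->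
  (forall t, s < t < s + w -> - eps <= X t /\ - eps <= S t /\ - eps <= I t /\ - eps <= A t) ->
  forall t1, s <= t1 < s + w -> 0 <= X t1 /\ 0 <= S t1 /\ 0 <= I t1 /\ 0 <= A t1.
Proof.
intros Hs Hc Ha HK Hg Xs Ss Is As Hnear.
assert (HX : forall t1, s <= t1 < s + w -> 0 <= X t1).
{ intros t1 Ht1.
  apply (nonneg_preserved_linear X (fun t => fX r K alpha phi c (X t) (S t) (I t))
    (2 * r + 2 * alpha) s t1);
    [lra | exact (filterlim_at_right_of_is_derive X _ s cX dX Hs)
    | intros t Ht; apply dX; lra | | exact Xs].
  intros t Ht Hneg. destruct (Hnear t ltac:(lra)) as (Hx & HS & HI & _).
  apply (fX_ge_on_neg eps Hc HK); lra. }
assert (HS : forall t1, s <= t1 < s + w -> 0 <= S t1).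
{ intros t1 Ht1.
  apply (nonneg_preserved_linear S (fun t => fS alpha c m1 lambda a d (X t) (S t) (A t))
    (m1 * alpha + lambda) s t1);
    [lra | exact (filterlim_at_right_of_is_derive S _ s cS dS Hs)
    | intros t Ht; apply dS; lra | | exact Ss].
  intros t Ht Hneg. destruct (Hnear t ltac:(lra)) as (Hx & _ & _ & HA).
  apply (fS_ge_on_neg eps Hc Ha); lra. }
assert (HA : forall t1, s <= t1 < s + w -> 0 <= A t1).
{ intros t1 Ht1.
  apply (nonneg_preserved A (fun t => fA gamma sigma eta (S t) (I t) (A t)) s t1);
    [lra | exact (filterlim_at_right_of_is_derive A _ s cA dA Hs)
    | intros t Ht; apply dA; lra | | exact As].
  intros t Ht Hneg. destruct (Hnear t ltac:(lra)) as (_ & HS' & HI & _).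
  apply (fA_nonneg_on_neg eps Hg); lra. }
intros t1 Ht1. repeat split; [apply HX, Ht1 | apply HS, Ht1 | | apply HA, Ht1].
apply (nonneg_preserved_linear I
  (fun t => fI alpha phi c m2 lambda a d delta (X t) (S t) (I t) (A t)) (m2 * phi * alpha) s t1);
  [lra | exact (filterlim_at_right_of_is_derive I _ s cI dI Hs)
  | intros t Ht; apply dI; lra | | exact Is].
intros t Ht Hneg. destruct (Hnear t ltac:(lra)) as (Hx & _ & _ & _).
apply (fI_ge_on_neg eps Hc); [lra | apply HS; lra | exact Hneg | apply HA; lra].
Qed.

Lemma solution_nonneg :
  0 <= X 0 -> 0 <= S 0 -> 0 <= I 0 -> 0 <= A 0 ->
  forall t, 0 <= t -> 0 <= X t /\ 0 <= S t /\ 0 <= I t /\ 0 <= A t.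
Proof.
intros X0 S0 I0 A0.
apply continuous_induction; [auto | |].
- intros s Hs (Xs & Ss & Is & As).
  set (eps := Rmin (Rmin (c / 2) (a / 2)) (Rmin K (gamma / (2 * sigma)))).
  assert (eps_pos : 0 < eps)
    by (unfold eps; repeat apply Rmin_pos; try apply Rdiv_lt_0_compat; lra).
  assert (Hnear : at_right s (fun t => - eps < X t /\ - eps < S t /\ - eps < I t /\ - eps < A t)).
  { repeat apply filter_and;
      [apply (filterlim_at_right_of_is_derive X _ s cX dX Hs)
      | apply (filterlim_at_right_of_is_derive S _ s cS dS Hs)
      | apply (filterlim_at_right_of_is_derive I _ s cI dI Hs)
      | apply (filterlim_at_right_of_is_derive A _ s cA dA Hs)];
      apply open_gt; lra. }
  destruct Hnear as [w Hw].
  exists (w / 2). split; [destruct w; simpl; lra |].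
  intros t1 Ht1.
  apply (solution_nonneg_near s eps w); auto.
  + unfold eps. etransitivity; apply Rmin_l.
  + unfold eps. etransitivity; [apply Rmin_l | apply Rmin_r].
  + unfold eps. etransitivity; [apply Rmin_r | apply Rmin_l].
  + unfold eps. etransitivity; apply Rmin_r.
  + intros t Ht. destruct (Hw t) as (? & ? & ? & ?); [apply ball_R; lra | lra |].
    repeat split; lra.
  + destruct w; simpl in *; lra.
- intros s Hs Hbefore. repeat split; apply (nonneg_of_nonneg_before _ s Hs);
    try (intros t Ht; apply (Hbefore t Ht)).
  + exact (ex_derive_continuous X s (ex_intro _ _ (dX s Hs))).
  + exact (ex_derive_continuous S s (ex_intro _ _ (dS s Hs))).
  + exact (ex_derive_continuous I s (ex_intro _ _ (dI s Hs))).
  + exact (ex_derive_continuous A s (ex_intro _ _ (dA s Hs))).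
Qed.

Lemma X_le (M : R) :
  K <= M -> X 0 <= M ->
  (forall t, 0 <= t -> 0 <= X t /\ 0 <= S t /\ 0 <= I t /\ 0 <= A t) ->
  forall t, 0 <= t -> X t <= M.
Proof.
intros HKM HX0 Hpos. apply (le_preserved X _ M cX dX); [| exact HX0].
intros t Ht HMX. destruct (Hpos t (Rlt_le _ _ Ht)) as (_ & HS & HI & _).
apply fX_nonpos_ge_K; lra.
Qed.

Lemma weighted_total_le (M : R) :
  (forall t, 0 <= t -> 0 <= X t /\ 0 <= S t /\ 0 <= I t /\ 0 <= A t) ->
  (forall t, 0 <= t -> X t <= M) ->
  forall t, 0 <= t ->
    m1 * X t + S t + I t <= Rmax (m1 * X 0 + S 0 + I 0) (m1 * (r + d) * M / d).
Proof.
intros Hpos HM.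
apply (le_Rmax_of_dissipative (fun t => m1 * X t + S t + I t)
  (fun t => m1 * fX r K alpha phi c (X t) (S t) (I t) + fS alpha c m1 lambda a d (X t) (S t) (A t)
            + fI alpha phi c m2 lambda a d delta (X t) (S t) (I t) (A t)) _ d hd).
- apply filterlim_plus_fun; [apply filterlim_plus_fun |]; [| exact cS | exact cI].
  exact (filterlim_comp _ _ _ X (Rmult m1) _ _ _ cX (filterlim_scal_r (K := R_AbsRing) m1 (X 0))).
- intros t Ht.
  exact (is_derive_plus _ _ _ _ _
           (is_derive_plus _ _ _ _ _ (is_derive_scal X t m1 _ (dX t Ht)) (dS t Ht)) (dI t Ht)).
- intros t Ht. destruct (Hpos t (Rlt_le _ _ Ht)) as (HX & HS & HI & _).
  apply weighted_sum_dissipative; auto.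
  split; [exact HX | apply HM; lra].
Qed.

Lemma A_le (LW : R) :
  (forall t, 0 <= t -> S t + I t <= LW) ->
  forall t, 0 <= t -> A t <= Rmax (A 0) ((gamma + sigma * LW) / eta).
Proof.
intros HSI. apply (le_Rmax_of_dissipative A _ _ eta heta cA dA).
intros t Ht. specialize (HSI t (Rlt_le _ _ Ht)). unfold fA. nra.
Qed.

End Solution.

End Model.

Theorem theorem1
  (r K alpha phi c m1 m2 lambda a d delta gamma sigma eta : R)
  (hr : 0 < r) (hK : 0 < K) (halpha : 0 < alpha) (hphi : 0 < phi)
  (hc : 0 < c) (hm1 : 0 < m1) (hm2 : 0 < m2) (hlambda : 0 < lambda)
  (ha : 0 < a) (hd : 0 < d) (hdelta : 0 < delta) (hgamma : 0 < gamma)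
  (hsigma : 0 < sigma) (heta : 0 < eta)
  (hphi1 : phi < 1) (hm12 : m2 < m1)
  (X S I A : R -> R)
  (* continuity from the right at the initial time t = 0 *)
  (cX : filterlim X (at_right 0) (locally (X 0)))
  (cS : filterlim S (at_right 0) (locally (S 0)))
  (cI : filterlim I (at_right 0) (locally (I 0)))
  (cA : filterlim A (at_right 0) (locally (A 0)))
  (* the ODE system holds for all t > 0 *)
  (dX : forall t, 0 < t -> is_derive X t (fX r K alpha phi c (X t) (S t) (I t)))
  (dS : forall t, 0 < t -> is_derive S t (fS alpha c m1 lambda a d (X t) (S t) (A t)))
  (dI : forall t, 0 < t ->
        is_derive I t (fI alpha phi c m2 lambda a d delta (X t) (S t) (I t) (A t)))
  (dA : forall t, 0 < t -> is_derive A t (fA gamma sigma eta (S t) (I t) (A t)))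
  (* the initial state lies in D, with M = max{X(0), K} *)
  (h0 : in_D r d sigma eta (Rmax (X 0) K) (X 0) (S 0) (I 0) (A 0)) :
  exists B : R, forall t, 0 <= t ->
    Rabs (X t) <= B /\ Rabs (S t) <= B /\ Rabs (I t) <= B /\ Rabs (A t) <= B.
Proof.
destruct h0 as (X0 & S0 & I0 & A0 & _).
assert (Hpos := solution_nonneg hr hK halpha hphi hc hm1 hm2 hlambda ha hd hdelta hgamma
  hsigma heta hphi1 cX cS cI cA dX dS dI dA X0 S0 I0 A0).
set (M := Rmax (X 0) K).
assert (HX := X_le hr hK halpha hphi hc cX dX M (Rmax_r _ _) (Rmax_l _ _) Hpos).
set (LW := Rmax (m1 * X 0 + S 0 + I 0) (m1 * (r + d) * M / d)).
assert (HW := weighted_total_le hr hK halpha hphi hc hm1 hd hdelta hm12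
  cX cS cI dX dS dI M Hpos HX).
assert (HSI : forall t, 0 <= t -> S t + I t <= LW).
{ intros t Ht. destruct (Hpos t Ht) as (HXt & _).
  assert (0 <= m1 * X t) by (apply Rmult_le_pos; lra).
  specialize (HW t Ht). fold LW in HW. lra. }
set (LA := Rmax (A 0) ((gamma + sigma * LW) / eta)).
assert (HA := A_le hsigma heta cA dA LW HSI).
exists (Rmax M (Rmax LW LA)). intros t Ht.
assert (HMB := Rmax_l M (Rmax LW LA)).
assert (HWB := Rle_trans _ _ _ (Rmax_l LW LA) (Rmax_r M _)).
assert (HAB := Rle_trans _ _ _ (Rmax_r LW LA) (Rmax_r M _)).
destruct (Hpos t Ht) as (HXt & HSt & HIt & HAt).
specialize (HX t Ht). specialize (HSI t Ht). specialize (HA t Ht). fold LA in HA.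
rewrite !Rabs_pos_eq by assumption. repeat split; lra.
Qed.
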